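(* Let $C=6\pi/\sqrt2$. There is $\Gamma_0>0$ such that for all $\Gamma\in(0,\Gamma_0)$ the following holds. Let $\mathbb L\subset\mathbb Z^3$ be a lattice plaquette (unit square) and let $\theta_{\boldsymbol r'}$, $\boldsymbol r'\in\mathbb L$, be angles such that $|S^{(\gamma)}_{\boldsymbol r'}-S^{(\gamma)}_{\boldsymbol r''}|<\Gamma$ for each of the four bonds $(\boldsymbol r',\boldsymbol r'')$ of $\mathbb L$, with $\gamma$ the direction of that bond. Then for any $\boldsymbol r\in\mathbb L$, either all $\theta_{\boldsymbol r'}$, $\boldsymbol r'\in\mathbb L$, are within $C\sqrt\Gamma$ of $\theta_{\boldsymbol r}$, or there is a direction $\alpha$ among the two spanning $\mathbb L$ such that the neighbour $\boldsymbol r'$ of $\boldsymbol r$ with $\boldsymbol r'-\boldsymbol r\perp\hat{\mathrm e}_\alpha$ has $\theta_{\boldsymbol r'}$ within $C\sqrt\Gamma$ of $\theta_{\boldsymbol r}$ while the other two sites of $\mathbb L$ have angles within $C\sqrt\Gamma$ of $2\phi_\alpha-\theta_{\boldsymbol r}$ (the reflection of $\theta_{\boldsymbol r}$ through the $\alpha$-th of $\hat{\mathrm a},\hat{\mathrm b},\hat{\mathrm c}$). Angular distances are mod $2\pi$.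
   Context: $\boldsymbol S_{\boldsymbol r}=(\cos\theta_{\boldsymbol r},\sin\theta_{\boldsymbol r})$; $\hat{\mathrm a},\hat{\mathrm b},\hat{\mathrm c}$ are the unit vectors at angles $\phi_1=0,\phi_2=\tfrac{2\pi}3,\phi_3=-\tfrac{2\pi}3$ associated with lattice directions $\hat{\mathrm e}_1,\hat{\mathrm e}_2,\hat{\mathrm e}_3$, and $S^{(\gamma)}_{\boldsymbol r}=\cos(\theta_{\boldsymbol r}-\phi_\gamma)$. *)

From Stdlib Require Export Reals ZArith.
Open Scope R_scope.

Inductive dir : Set := D1 | D2 | D3.

Definition site : Set := (Z * Z * Z)%type.

Definition evec (g : dir) : site :=
  match g with
  | D1 => (1, 0, 0)%Z
  | D2 => (0, 1, 0)%Z
  | D3 => (0, 0, 1)%Z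
  end.

Definition vadd (u v : site) : site :=
  let '(a1, a2, a3) := u in let '(b1, b2, b3) := v in
  ((a1 + b1)%Z, (a2 + b2)%Z, (a3 + b3)%Z).

Definition vsub (u v : site) : site :=
  let '(a1, a2, a3) := u in let '(b1, b2, b3) := v in
  ((a1 - b1)%Z, (a2 - b2)%Z, (a3 - b3)%Z).

Definition dotZ (u v : site) : Z :=
  let '(a1, a2, a3) := u in let '(b1, b2, b3) := v in
  (a1 * b1 + a2 * b2 + a3 * b3)%Z.

Definition phi (g : dir) : R :=
  match g with
  | D1 => 0
  | D2 => 2 * PI / 3
  | D3 => - (2 * PI / 3)
  end.

Definition Sg (g : dir) (th : R) : R := cos (th - phi g).

Definition ang_within (t u d : R) : Prop :=
  exists k : Z, Rabs (t - u - 2 * PI * IZR k) <= d.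

Definition in_plaq (x : site) (a b : dir) (r : site) : Prop :=
  r = x \/ r = vadd x (evec a) \/ r = vadd x (evec b)
  \/ r = vadd (vadd x (evec a)) (evec b).

Definition plaq_bond_hyp (G : R) (x : site) (a b : dir) (th : site -> R) : Prop :=
  let xa := vadd x (evec a) in
  let xb := vadd x (evec b) in
  let xab := vadd xa (evec b) in
  Rabs (Sg a (th x) - Sg a (th xa)) < G /\
  Rabs (Sg a (th xb) - Sg a (th xab)) < G /\
  Rabs (Sg b (th x) - Sg b (th xb)) < G /\
  Rabs (Sg b (th xa) - Sg b (th xab)) < G.

Definition Cconst : R := 6 * PI / sqrt 2.

(* A bond in direction g forces cos (t' - phi g) ~ cos (t - phi g); writing the
   difference of cosines as a product of two sines, one half-angle is close to a
   multiple of pi, so t' is close to t or to its mirror image 2 phi g - t.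
   Going from r to the opposite corner of the plaquette along its two paths
   therefore gives two words in the mirrors [mirror a], [mirror b] applied to
   theta_r that must agree up to O(sqrt G).  Since [mirror a \o mirror b] is the
   rotation by 2 (phi a - phi b), which is 2pi/3 or 4pi/3 modulo 2pi, and so is
   its square, incompatible words are excluded; what remains is exactly the
   stated dichotomy. *)
From Stdlib Require Import Reals Lra Lia ZArith.
Open Scope R_scope.

Lemma Rabs_le_bounds x d : Rabs x <= d -> - d <= x <= d.
Proof.
  intros H; split; [|exact (Rle_trans _ _ _ (Rle_abs x) H)].
  rewrite <- Rabs_Ropp in H; assert (H' := Rle_abs (- x)); lra.
Qed.

Lemma ang_within_intro t u d (k : Z) : - d <= t - u - 2 * PI * IZR k <= d ->
  ang_within t u d.
Proof. intros H; exists k; apply Rabs_le, H. Qed.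

Lemma ang_within_refl t d : 0 <= d -> ang_within t t d.
Proof. intros Hd; apply (ang_within_intro _ _ _ 0); simpl; lra. Qed.

Lemma ang_within_sym t u d : ang_within t u d -> ang_within u t d.
Proof.
  intros [k H%Rabs_le_bounds]; apply (ang_within_intro _ _ _ (- k)).
  rewrite opp_IZR; lra.
Qed.

Lemma ang_within_trans t u v d1 d2 :
  ang_within t u d1 -> ang_within u v d2 -> ang_within t v (d1 + d2).
Proof.
  intros [k1 H1%Rabs_le_bounds] [k2 H2%Rabs_le_bounds].
  apply (ang_within_intro _ _ _ (k1 + k2)); rewrite plus_IZR; lra.
Qed.

Lemma ang_within_common v x y d1 d2 :
  ang_within v x d1 -> ang_within v y d2 -> ang_within x y (d1 + d2).
Proof. intros H1 H2; exact (ang_within_trans _ _ _ _ _ (ang_within_sym _ _ _ H1) H2). Qed.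

Lemma ang_within_le t u d d' : ang_within t u d -> d <= d' -> ang_within t u d'.
Proof. intros [k H%Rabs_le_bounds] Hd; apply (ang_within_intro _ _ _ k); lra. Qed.

Lemma not_ang_within_third_turn (n : Z) t d : (n mod 3 <> 0)%Z -> d < 2 * PI / 3 ->
  ~ ang_within (t + 2 * PI / 3 * IZR n) t d.
Proof.
  intros Hn Hd [k H%Rabs_le_bounds].
  assert (HPI := PI_RGT_0).
  replace (t + 2 * PI / 3 * IZR n - t - 2 * PI * IZR k)
    with (2 * PI / 3 * IZR (n - 3 * k)) in H
    by (rewrite minus_IZR, mult_IZR; simpl; field).
  assert (Hnk : (n - 3 * k <> 0)%Z).
  { intros E; apply Hn; replace n with (k * 3)%Z by lia; apply Z_mod_mult. }
  destruct (Z_lt_le_dec (n - 3 * k) 0).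
  - assert (IZR (n - 3 * k) <= -1) by (apply IZR_le; lia); nra.
  - assert (1 <= IZR (n - 3 * k)) by (apply IZR_le; lia); nra.
Qed.

Definition mirror (g : dir) (t : R) : R := 2 * phi g - t.

Lemma mirror_involutive g t : mirror g (mirror g t) = t.
Proof. unfold mirror; ring. Qed.

Lemma ang_within_mirror g t u d :
  ang_within t u d -> ang_within (mirror g t) (mirror g u) d.
Proof.
  intros [k H%Rabs_le_bounds]; apply (ang_within_intro _ _ _ (- k)).
  unfold mirror; rewrite opp_IZR; lra.
Qed.

Lemma phi_sub_third_turns a b : a <> b -> exists m : Z,
  phi a - phi b = 2 * PI / 3 * IZR m /\ (m = 1 \/ m = -1 \/ m = 2 \/ m = -2)%Z.
Proof.
  intros Hab; destruct a, b; try congruence; simpl phi;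
  [exists (-1)%Z | exists 1%Z | exists 1%Z | exists 2%Z | exists (-1)%Z | exists (-2)%Z];
  (split; [simpl; field | lia]).
Qed.

Lemma not_ang_within_phi_rotation a b (k : Z) t d : a <> b -> (k = 1 \/ k = 2)%Z ->
  d < 2 * PI / 3 -> ~ ang_within (t + 2 * IZR k * (phi a - phi b)) t d.
Proof.
  intros Hab Hk Hd; destruct (phi_sub_third_turns a b Hab) as [m [-> Hm]].
  replace (2 * IZR k * (2 * PI / 3 * IZR m)) with (2 * PI / 3 * IZR (2 * k * m))
    by (rewrite !mult_IZR; simpl; ring).
  apply not_ang_within_third_turn; [|exact Hd].
  destruct Hk as [-> | ->]; destruct Hm as [-> | [-> | [-> | ->]]]; discriminate.
Qed.

Lemma not_ang_within_mirrors a b t d : a <> b -> d < 2 * PI / 3 ->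
  ~ ang_within (mirror a t) (mirror b t) d.
Proof.
  intros Hab Hd; unfold mirror.
  replace (2 * phi a - t) with ((2 * phi b - t) + 2 * IZR 1 * (phi a - phi b))
    by (simpl; ring).
  apply not_ang_within_phi_rotation; auto.
Qed.

Lemma not_ang_within_mirror_mirror a b t d : a <> b -> d < 2 * PI / 3 ->
  ~ ang_within (mirror a (mirror b t)) t d.
Proof.
  intros Hab Hd; unfold mirror.
  replace (2 * phi a - (2 * phi b - t)) with (t + 2 * IZR 1 * (phi a - phi b))
    by (simpl; ring).
  apply not_ang_within_phi_rotation; auto.
Qed.

Lemma not_ang_within_mirror_swap a b t d : a <> b -> d < 2 * PI / 3 ->
  ~ ang_within (mirror a (mirror b t)) (mirror b (mirror a t)) d.
Proof.
  intros Hab Hd; unfold mirror.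
  replace (2 * phi a - (2 * phi b - t))
    with ((2 * phi b - (2 * phi a - t)) + 2 * IZR 2 * (phi a - phi b))
    by (simpl; ring).
  apply not_ang_within_phi_rotation; auto.
Qed.

Definition bond_rel (g : dir) (u v e : R) : Prop :=
  ang_within v u e \/ ang_within v (mirror g u) e.

Lemma bond_rel_transport g u v w e d : bond_rel g u v e -> ang_within u w d ->
  ang_within v w (e + d) \/ ang_within v (mirror g w) (e + d).
Proof.
  intros [H|H] Huw; [left | right]; apply (ang_within_trans _ _ _ _ _ H); auto.
  apply ang_within_mirror, Huw.
Qed.

(* In the plaquette lemmas [t] is the angle at a corner, [r1], [r2], [r3] those at
   its a-neighbour, its b-neighbour and the opposite corner. *)
Lemma plaquette_untwisted a b t r1 r2 r3 e : a <> b -> 4 * e < 2 * PI / 3 ->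
  ang_within r1 t e -> ang_within r2 t e ->
  bond_rel b r1 r3 e -> bond_rel a r2 r3 e -> ang_within r3 t (e + e).
Proof.
  intros Hab He H1 H2 H3 H4.
  destruct (bond_rel_transport _ _ _ _ _ _ H3 H1) as [C1|C1]; [exact C1|].
  destruct (bond_rel_transport _ _ _ _ _ _ H4 H2) as [C2|C2]; [exact C2|].
  exfalso; apply (not_ang_within_mirrors b a t (e + e + (e + e))); auto; [lra|].
  exact (ang_within_common _ _ _ _ _ C1 C2).
Qed.

Lemma plaquette_twisted_once a b t r1 r2 r3 e : a <> b -> 4 * e < 2 * PI / 3 ->
  ang_within r1 t e -> ang_within r2 (mirror b t) e ->
  bond_rel b r1 r3 e -> bond_rel a r2 r3 e -> ang_within r3 (mirror b t) (e + e).
Proof.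
  intros Hab He H1 H2 H3 H4.
  destruct (bond_rel_transport _ _ _ _ _ _ H3 H1) as [C1|C1]; [|exact C1].
  destruct (bond_rel_transport _ _ _ _ _ _ H4 H2) as [C2|C2]; [exact C2|].
  exfalso; apply (not_ang_within_mirror_mirror a b t (e + e + (e + e))); auto; [lra|].
  exact (ang_within_sym _ _ _ (ang_within_common _ _ _ _ _ C1 C2)).
Qed.

Lemma plaquette_twisted_twice a b t r1 r2 r3 e : a <> b -> 4 * e < 2 * PI / 3 ->
  ang_within r1 (mirror a t) e -> ang_within r2 (mirror b t) e ->
  bond_rel b r1 r3 e -> bond_rel a r2 r3 e ->
  (ang_within r3 (mirror a t) (e + e) /\ ang_within (mirror b t) t (e + e + (e + e)))
  \/ (ang_within r3 (mirror b t) (e + e) /\ ang_within (mirror a t) t (e + e + (e + e))).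
Proof.
  intros Hab He H1 H2 H3 H4.
  assert (Hba : b <> a) by congruence.
  assert (Hd : e + e + (e + e) < 2 * PI / 3) by lra.
  destruct (bond_rel_transport _ _ _ _ _ _ H3 H1) as [C1|C1],
           (bond_rel_transport _ _ _ _ _ _ H4 H2) as [C2|C2].
  - exfalso; exact (not_ang_within_mirrors a b t _ Hab Hd (ang_within_common _ _ _ _ _ C1 C2)).
  - left; split; [exact C1|].
    rewrite <- (mirror_involutive a t) at 2.
    rewrite <- (mirror_involutive a (mirror b t)).
    apply ang_within_mirror, ang_within_sym, (ang_within_common _ _ _ _ _ C1 C2).
  - right; split; [exact C2|].
    rewrite <- (mirror_involutive b t) at 2.
    rewrite <- (mirror_involutive b (mirror a t)).
    apply ang_within_mirror, ang_within_sym, (ang_within_common _ _ _ _ _ C2 C1).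
  - exfalso; apply (not_ang_within_mirror_swap b a t _ Hba Hd).
    exact (ang_within_common _ _ _ _ _ C1 C2).
Qed.

Lemma plaquette_trichotomy a b t r1 r2 r3 e d :
  a <> b -> 0 <= e -> 4 * e < 2 * PI / 3 -> 5 * e <= d ->
  bond_rel a t r1 e -> bond_rel b t r2 e -> bond_rel b r1 r3 e -> bond_rel a r2 r3 e ->
  (ang_within r1 t d /\ ang_within r2 t d /\ ang_within r3 t d) \/
  (ang_within r1 t d /\ ang_within r2 (mirror b t) d /\ ang_within r3 (mirror b t) d) \/
  (ang_within r2 t d /\ ang_within r1 (mirror a t) d /\ ang_within r3 (mirror a t) d).
Proof.
  intros Hab He0 He Hed H1 H2 H3 H4.
  assert (Hba : b <> a) by congruence.
  assert (widen : forall x y d', ang_within x y d' -> d' <= d -> ang_within x y d)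
    by (intros; eapply ang_within_le; eauto).
  destruct H1 as [H1|H1], H2 as [H2|H2].
  - left; refine (conj (widen _ _ _ H1 _) (conj (widen _ _ _ H2 _) (widen _ _ _
      (plaquette_untwisted _ _ _ _ _ _ _ Hab He H1 H2 H3 H4) _))); lra.
  - right; left; refine (conj (widen _ _ _ H1 _) (conj (widen _ _ _ H2 _) (widen _ _ _
      (plaquette_twisted_once _ _ _ _ _ _ _ Hab He H1 H2 H3 H4) _))); lra.
  - right; right; refine (conj (widen _ _ _ H2 _) (conj (widen _ _ _ H1 _) (widen _ _ _
      (plaquette_twisted_once _ _ _ _ _ _ _ Hba He H2 H1 H4 H3) _))); lra.
  - destruct (plaquette_twisted_twice _ _ _ _ _ _ _ Hab He H1 H2 H3 H4) as [[C3 C]|[C3 C]].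
    + right; right; refine (conj (widen _ _ _ (ang_within_trans _ _ _ _ _ H2 C) _)
        (conj (widen _ _ _ H1 _) (widen _ _ _ C3 _))); lra.
    + right; left; refine (conj (widen _ _ _ (ang_within_trans _ _ _ _ _ H1 C) _)
        (conj (widen _ _ _ H2 _) (widen _ _ _ C3 _))); lra.
Qed.

Lemma Rabs_sin_sub_kPI x (k : Z) : Rabs (sin (x - IZR k * PI)) = Rabs (sin x).
Proof.
  assert (Hs : sin (IZR k * PI) = 0) by (apply sin_eq_0_1; exists k; reflexivity).
  assert (Hc : cos (IZR k * PI) * cos (IZR k * PI) = 1).
  { assert (H := sin2_cos2 (IZR k * PI)); unfold Rsqr in H; rewrite Hs in H; lra. }
  rewrite sin_minus, Hs, Rmult_0_r, Rminus_0_r, Rabs_mult.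
  replace (Rabs (cos (IZR k * PI))) with 1; [ring|].
  unfold Rabs; destruct Rcase_abs; nra.
Qed.

Lemma exists_multiple_PI_near x : exists k : Z, Rabs (x - IZR k * PI) <= PI / 2.
Proof.
  assert (HPI := PI_RGT_0).
  set (w := x / PI + 1 / 2); destruct (archimed w) as [Hw1 Hw2].
  exists (up w - 1)%Z; apply Rabs_le; rewrite minus_IZR.
  replace (x - (IZR (up w) - IZR 1) * PI) with ((w + 1 / 2 - IZR (up w)) * PI)
    by (unfold w; simpl; field; lra).
  assert (0 <= (w + 1 / 2 - IZR (up w) + 1 / 2) * PI) by (apply Rmult_le_pos; lra).
  assert (0 <= (1 / 2 - (w + 1 / 2 - IZR (up w))) * PI) by (apply Rmult_le_pos; lra).
  lra.
Qed.

Lemma Rabs_sin_Rabs z : Rabs z <= PI -> Rabs (sin z) = sin (Rabs z).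
Proof.
  intros H; unfold Rabs in *; destruct (Rcase_abs z).
  - rewrite sin_neg; destruct (Rcase_abs (sin z)); [reflexivity|].
    assert (0 <= sin (- z)) by (apply sin_ge_0; lra); rewrite sin_neg in *; lra.
  - destruct (Rcase_abs (sin z)); [|reflexivity].
    assert (0 <= sin z) by (apply sin_ge_0; lra); lra.
Qed.

Lemma sin_ge_cubic y : 0 <= y <= PI -> y - y ^ 3 / 6 <= sin y.
Proof.
  intros [H0 H1]; destruct (sin_bound y 0 H0 H1) as [H _].
  unfold sin_approx, sin_term in H; simpl in H; lra.
Qed.

Lemma near_multiple_PI_of_small_sin A s : s <= 1 / 10 -> Rabs (sin A) < s ->
  exists k : Z, Rabs (A - IZR k * PI) <= 6 / 5 * s.
Proof.
  intros Hs HA; assert (HPI := PI_RGT_0); assert (HPI4 := PI_4).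
  destruct (exists_multiple_PI_near A) as [k Hk]; exists k.
  rewrite <- (Rabs_sin_sub_kPI A k), Rabs_sin_Rabs in HA by lra.
  set (y := Rabs (A - IZR k * PI)) in *.
  assert (Hy0 : 0 <= y) by apply Rabs_pos.
  assert (Hsin : y - y ^ 3 / 6 <= sin y) by (apply sin_ge_cubic; lra).
  (* A crude bound y < 3 s first, so that the cubic term costs only a factor 5/6. *)
  assert (y * y <= 4) by nra.
  assert (y < 3 * s) by nra.
  nra.
Qed.

Lemma bond_rel_of_Sg_close g t t' s : 0 < s <= 1 / 10 ->
  Rabs (Sg g t - Sg g t') < 2 * s ^ 2 -> bond_rel g t t' (12 / 5 * s).
Proof.
  intros Hs H; unfold Sg in H; rewrite form2, !Rabs_mult in H.
  replace (Rabs (-2)) with 2 in H by (rewrite Rabs_left; lra).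
  set (X := sin ((t - phi g - (t' - phi g)) / 2)) in H.
  set (Y := sin ((t - phi g + (t' - phi g)) / 2)) in H.
  assert (HXY : Rabs X < s \/ Rabs Y < s).
  { destruct (Rlt_le_dec (Rabs X) s); [now left|].
    destruct (Rlt_le_dec (Rabs Y) s); [now right|].
    assert (s * s <= Rabs X * Rabs Y) by (apply Rmult_le_compat; lra); nra. }
  destruct HXY as [HX|HY].
  - left; destruct (near_multiple_PI_of_small_sin _ s ltac:(lra) HX) as [k Hk%Rabs_le_bounds].
    apply (ang_within_intro _ _ _ (- k)); rewrite opp_IZR; lra.
  - right; destruct (near_multiple_PI_of_small_sin _ s ltac:(lra) HY) as [k Hk%Rabs_le_bounds].
    apply (ang_within_intro _ _ _ k); unfold mirror; lra.
Qed.

Definition corner (x : site) (a b : dir) (i j : bool) : site :=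
  match i, j with
  | false, false => x
  | true, false => vadd x (evec a)
  | false, true => vadd x (evec b)
  | true, true => vadd (vadd x (evec a)) (evec b)
  end.

Lemma in_plaq_corner x a b r : in_plaq x a b r -> exists i j, r = corner x a b i j.
Proof.
  intros [-> | [-> | [-> | ->]]];
    [exists false, false | exists true, false | exists false, true | exists true, true];
    reflexivity.
Qed.

Lemma in_plaq_corner_cases x a b i j r : in_plaq x a b r ->
  r = corner x a b i j \/ r = corner x a b (negb i) j \/
  r = corner x a b i (negb j) \/ r = corner x a b (negb i) (negb j).
Proof. unfold in_plaq; destruct i, j; simpl; tauto. Qed.

Lemma dotZ_corner_first x a b i j i' j' : a <> b ->
  dotZ (vsub (corner x a b i' j') (corner x a b i j)) (evec a) = (Z.b2z i' - Z.b2z i)%Z.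
Proof.
  intros Hab; destruct x as [[x1 x2] x3], a, b; try congruence;
  destruct i, j, i', j'; simpl; lia.
Qed.

Lemma dotZ_corner_second x a b i j i' j' : a <> b ->
  dotZ (vsub (corner x a b i' j') (corner x a b i j)) (evec b) = (Z.b2z j' - Z.b2z j)%Z.
Proof.
  intros Hab; destruct x as [[x1 x2] x3], a, b; try congruence;
  destruct i, j, i', j'; simpl; lia.
Qed.

Lemma b2z_negb_sub i : (Z.b2z (negb i) - Z.b2z i <> 0)%Z.
Proof. destruct i; discriminate. Qed.

Section PlaquetteAngles.
Variables (x : site) (a b : dir) (th : site -> R) (i j : bool) (d : R).
Hypothesis Hd : 0 <= d.
Let t := th (corner x a b i j).
Let t10 := th (corner x a b (negb i) j).
Let t01 := th (corner x a b i (negb j)).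
Let t11 := th (corner x a b (negb i) (negb j)).

Lemma plaq_all_within : ang_within t10 t d -> ang_within t01 t d -> ang_within t11 t d ->
  forall r, in_plaq x a b r -> ang_within (th r) t d.
Proof.
  intros H10 H01 H11 r Hr.
  destruct (in_plaq_corner_cases x a b i j r Hr) as [-> | [-> | [-> | ->]]];
    auto using ang_within_refl.
Qed.

Lemma plaq_mirror_within_first : a <> b ->
  ang_within t01 t d -> ang_within t10 (mirror a t) d -> ang_within t11 (mirror a t) d ->
  forall r, in_plaq x a b r ->
    (dotZ (vsub r (corner x a b i j)) (evec a) = 0%Z -> ang_within (th r) t d) /\
    (dotZ (vsub r (corner x a b i j)) (evec a) <> 0%Z -> ang_within (th r) (mirror a t) d).
Proof.
  intros Hab H01 H10 H11 r Hr.
  destruct (in_plaq_corner_cases x a b i j r Hr) as [-> | [-> | [-> | ->]]];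
    rewrite dotZ_corner_first by exact Hab;
    assert (Hi := b2z_negb_sub i); rewrite ?Z.sub_diag;
    split; intros Hdot; solve [auto using ang_within_refl | congruence].
Qed.

Lemma plaq_mirror_within_second : a <> b ->
  ang_within t10 t d -> ang_within t01 (mirror b t) d -> ang_within t11 (mirror b t) d ->
  forall r, in_plaq x a b r ->
    (dotZ (vsub r (corner x a b i j)) (evec b) = 0%Z -> ang_within (th r) t d) /\
    (dotZ (vsub r (corner x a b i j)) (evec b) <> 0%Z -> ang_within (th r) (mirror b t) d).
Proof.
  intros Hab H10 H01 H11 r Hr.
  destruct (in_plaq_corner_cases x a b i j r Hr) as [-> | [-> | [-> | ->]]];
    rewrite dotZ_corner_second by exact Hab;
    assert (Hj := b2z_negb_sub j); rewrite ?Z.sub_diag;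
    split; intros Hdot; solve [auto using ang_within_refl | congruence].
Qed.

End PlaquetteAngles.

Lemma plaq_bond_rel x a b th s : 0 < s <= 1 / 10 ->
  plaq_bond_hyp (2 * s ^ 2) x a b th -> forall i j,
  bond_rel a (th (corner x a b i j)) (th (corner x a b (negb i) j)) (12 / 5 * s) /\
  bond_rel b (th (corner x a b i j)) (th (corner x a b i (negb j))) (12 / 5 * s).
Proof.
  intros Hs (B1 & B2 & B3 & B4) i j.
  destruct i, j; split; apply bond_rel_of_Sg_close; try exact Hs;
    cbn [corner negb]; first [assumption | rewrite Rabs_minus_sym; assumption].
Qed.

Lemma Cconst_mul_sqrt G : 0 <= G -> Cconst * sqrt G = 6 * PI * sqrt (G / 2).
Proof.
  intros HG; unfold Cconst; rewrite sqrt_div_alt by lra.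
  assert (0 < sqrt 2) by (apply sqrt_lt_R0; lra); field; lra.
Qed.

Theorem lemma6p7 :
  exists G0 : R, 0 < G0 /\
  forall G : R, 0 < G < G0 ->
  forall (x : site) (a b : dir), a <> b ->
  forall th : site -> R,
  plaq_bond_hyp G x a b th ->
  forall r : site, in_plaq x a b r ->
    (forall r', in_plaq x a b r' -> ang_within (th r') (th r) (Cconst * sqrt G))
    \/
    (exists al : dir, (al = a \/ al = b) /\
       forall r', in_plaq x a b r' ->
         (dotZ (vsub r' r) (evec al) = 0%Z ->
            ang_within (th r') (th r) (Cconst * sqrt G)) /\
         (dotZ (vsub r' r) (evec al) <> 0%Z ->
            ang_within (th r') (2 * phi al - th r) (Cconst * sqrt G))).
Proof.
  exists (1 / 100); split; [lra|].
  intros G [HG0 HG1] x a b Hab th Hbond r Hr.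
  assert (HPI := PI2_3_2).
  (* Each bond costs 12/5 s; the worst chain costs five times that, i.e. 12 s, and
     C sqrt G = 6 pi s. *)
  set (s := sqrt (G / 2)).
  assert (Hs2 : 2 * s ^ 2 = G) by (unfold s; simpl; rewrite Rmult_1_r, sqrt_sqrt; lra).
  assert (Hs : 0 < s <= 1 / 10) by (split; [apply sqrt_lt_R0; lra | nra]).
  assert (Hd : 5 * (12 / 5 * s) <= Cconst * sqrt G)
    by (rewrite Cconst_mul_sqrt by lra; fold s; nra).
  assert (Hd0 : 0 <= Cconst * sqrt G) by lra.
  rewrite <- Hs2 in Hbond.
  destruct (in_plaq_corner _ _ _ _ Hr) as [i [j ->]].
  destruct (plaq_bond_rel x a b th s Hs Hbond i j) as [B1 B2].
  destruct (plaq_bond_rel x a b th s Hs Hbond (negb i) j) as [_ B3].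
  destruct (plaq_bond_rel x a b th s Hs Hbond i (negb j)) as [B4 _].
  assert (He0 : 0 <= 12 / 5 * s) by lra.
  assert (He : 4 * (12 / 5 * s) < 2 * PI / 3) by lra.
  destruct (plaquette_trichotomy a b _ _ _ _ _ _ Hab He0 He Hd B1 B2 B3 B4)
    as [(N1 & N2 & N3) | [(N1 & N2 & N3) | (N2 & N1 & N3)]].
  - left; exact (plaq_all_within x a b th i j _ Hd0 N1 N2 N3).
  - right; exists b; split; [now right|].
    exact (plaq_mirror_within_second x a b th i j _ Hd0 Hab N1 N2 N3).
  - right; exists a; split; [now left|].
    exact (plaq_mirror_within_first x a b th i j _ Hd0 Hab N2 N1 N3).
Qed.
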